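(* Let $p$ be a positive integer, $H$ a graph, $T$ a complete rooted ternary tree and $V\subseteq V(T(H))$ with $|OC(T,V)|>p$. Then there exists a minimal sequence of largest subtrees of $T$ with respect to $V$ lacking $p$.
   Context: Complete rooted ternary tree: rooted tree in which all root-leaf paths have the same number of edges and every non-leaf vertex has exactly 3 children. Graph $T(H)$: for $V(H)=\{1,\dots,m\}$, vertices $v^i$ ($v\in V(T)$, $1\le i\le m$), each $\{v^1,\dots,v^m\}$ spanning a copy $H^v$ of $H$, plus edges $u^iv^i$ for $uv\in E(T)$; for a subtree $T'$ of $T$, $T'(H)$ is the subgraph induced by the copies $H^v$, $v\in V(T')$. For $V\subseteq V(T(H))$, $OC(T,V)=\{u\in V(T): V(H^u)\cap V\neq\emptyset\}$. An immediate subtree of $T$ is the subtree consisting of a child of the root and all its descendants; an immediate subtree $T'$ is largest with respect to $V$ if $|OC(T,V)\cap V(T')|$ is maximum among the immediate subtrees. A sequence of largest subtrees of $T$ w.r.t. $V$ is $T_1,\dots,T_q$ with $T_1=T$, $V_1=V$, and for $i<q$, $T_{i+1}$ a largest immediate subtree of $T_i$ w.r.t. $V_i$ and $V_{i+1}=V_i\cap V(T_{i+1}(H))$. It is a minimal sequence lacking $p$ if $|OC(T_1,V_1)|-|OC(T_q,V_q)|\geq p$ while $|OC(T_1,V_1)|-|OC(T_{q-1},V_{q-1})|<p$. *)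

From mathcomp Require Import all_boot.
Set Implicit Arguments. Unset Strict Implicit. Unset Printing Implicit Defensive.

(* Complete rooted ternary tree of depth d (all root-leaf paths have d edges).
   A vertex is the path from the root, a sequence of child indices in 'I_3
   (root = [::]); the children of w are rcons w c, c : 'I_3.
   tverts d enumerates all vertices (sequences of length <= d). *)
Fixpoint tverts (d : nat) : seq (seq 'I_3) :=
  if d is d'.+1 then [::] :: [seq c :: s | c <- enum 'I_3, s <- tverts d']
  else [:: [::]].

(* A subtree of T is identified with its root w: it consists of the
   vertices u of T having w as a prefix.  Vertices of T(H) are pairs
   (u, i) with u a vertex of T and i : 'I_m a vertex of H.
   OC d V w = OC(T_w, V ∩ V(T_w(H))): vertices u of the subtree T_w whose
   copy H^u meets V. *)
Definition OC (d m : nat) (V : pred (seq 'I_3 * 'I_m)) (w : seq 'I_3)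
  : seq (seq 'I_3) :=
  [seq u <- tverts d | prefix w u & [exists i : 'I_m, V (u, i)]].

(* The subtree rooted at rcons w c (c : 'I_3) is an immediate subtree of the
   subtree rooted at w (w non-leaf, i.e. size w < d); it is largest w.r.t. V. *)
Definition largest_child (d m : nat) (V : pred (seq 'I_3 * 'I_m))
  (w : seq 'I_3) (c : 'I_3) : Prop :=
  size w < d /\
  forall c' : 'I_3, size (OC d V (rcons w c')) <= size (OC d V (rcons w c)).

Definition seq_largest (d m : nat) (V : pred (seq 'I_3 * 'I_m))
  (ws : seq (seq 'I_3)) : Prop :=
  ohead ws = Some [::] /\
  forall i, i.+1 < size ws ->
    exists c : 'I_3, nth [::] ws i.+1 = rcons (nth [::] ws i) c /\
                     largest_child d V (nth [::] ws i) c.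

Definition minimal_seq_lacking (d m : nat) (V : pred (seq 'I_3 * 'I_m))
  (p : nat) (ws : seq (seq 'I_3)) : Prop :=
  seq_largest d V ws /\ 2 <= size ws /\
  p <= size (OC d V [::]) - size (OC d V (nth [::] ws (size ws).-1)) /\
  size (OC d V [::]) - size (OC d V (nth [::] ws (size ws).-2)) < p.

From mathcomp Require Import all_boot zify.

Set Implicit Arguments.
Unset Strict Implicit.
Unset Printing Implicit Defensive.

(* Follow the path T = T_0, T_1, ... that always descends into a largest
   immediate subtree.  The loss |OC(T_0)| - |OC(T_k)| is 0 at the root and at
   least |OC(T)| - 1 >= p at a leaf, whose subtree contains at most one
   occupied copy; stopping at the first k where the loss reaches p gives the
   required sequence.  Only which copies H^u meet V matters. *)

Lemma size_tverts d u : u \in tverts d -> size u <= d.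
Proof.
elim: d u => [|d IHd] u /=; first by rewrite inE => /eqP ->.
rewrite inE => /orP[/eqP -> // | /allpairsP[[c s] [_ s_in ->]]] /=.
by rewrite ltnS IHd.
Qed.

Lemma uniq_tverts d : uniq (tverts d).
Proof.
elim: d => [|d IHd] //=.
rewrite allpairs_uniq ?enum_uniq // ?andbT.
  by apply/negP => /allpairsP[[c s] [_ _ /=]].
by move=> [c s] [c' s'] _ _ /= [-> ->].
Qed.

Lemma prefix_leaf_tverts d (w u : seq 'I_3) :
  size w = d -> u \in tverts d -> prefix w u -> u = w.
Proof.
move=> size_w u_in; rewrite prefixE size_w take_oversize ?size_tverts //.
by move=> /eqP.
Qed.

Lemma size_OC_leaf d m (V : pred (seq 'I_3 * 'I_m)) w :
  size w = d -> size (OC d V w) <= 1.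
Proof.
move=> size_w; apply: (@uniq_leq_size _ _ [:: w]).
  exact/filter_uniq/uniq_tverts.
move=> u; rewrite mem_filter inE => /andP[/andP[w_u _] u_in].
by rewrite (prefix_leaf_tverts size_w u_in w_u).
Qed.

Section LargestPath.

Variables (d m : nat) (V : pred (seq 'I_3 * 'I_m)).

Definition largest_child_index (w : seq 'I_3) : 'I_3 :=
  [arg max_(c > ord0) size (OC d V (rcons w c))].

Lemma largest_child_indexP w :
  size w < d -> largest_child d V w (largest_child_index w).
Proof.
move=> w_inner; split=> // c; rewrite /largest_child_index.
by case: arg_maxnP => // c_max _; apply.
Qed.

Fixpoint largest_path (k : nat) : seq 'I_3 :=
  if k is k'.+1 then rcons (largest_path k') (largest_child_index (largest_path k'))
  else [::].

Lemma size_largest_path k : size (largest_path k) = k.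
Proof. by elim: k => //= k IHk; rewrite size_rcons IHk. Qed.

Lemma seq_largest_path k :
  k <= d -> seq_largest d V (mkseq largest_path k.+1).
Proof.
move=> k_le_d; split=> // i; rewrite size_mkseq => lt_i_k.
exists (largest_child_index (largest_path i)).
rewrite !nth_mkseq ?(ltnW lt_i_k) //; split=> //.
by apply: largest_child_indexP; rewrite size_largest_path -ltnS (leq_trans lt_i_k).
Qed.

End LargestPath.

Lemma ex_first_reach (g : nat -> nat) p n :
  g 0 < p -> p <= g n -> exists k, [/\ 0 < k <= n, p <= g k & g k.-1 < p].
Proof.
move=> g0_lt p_le_gn; have reach : exists k, p <= g k by exists n.
case: (ex_minnP reach) => k p_le_gk k_min.
have k_gt0 : 0 < k.
  by rewrite lt0n; apply: contraTneq p_le_gk => ->; rewrite -ltnNge.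
exists k; split=> //; first by rewrite k_gt0 (k_min n p_le_gn).
by rewrite ltnNge; apply/negP => /k_min; rewrite leqNgt ltn_predL k_gt0.
Qed.

Theorem lemma4 (p : nat) (m : nat) (H : rel 'I_m)
  (Hsym : symmetric H) (Hirr : irreflexive H)
  (d : nat) (V : pred (seq 'I_3 * 'I_m))
  (HV : forall x, V x -> x.1 \in tverts d) :
  0 < p -> p < size (OC d V [::]) ->
  exists ws : seq (seq 'I_3), minimal_seq_lacking d V p ws.
Proof.
move=> p_gt0 p_lt_N.
pose loss k := size (OC d V [::]) - size (OC d V (largest_path d V k)).
have loss0 : loss 0 < p by rewrite /loss subnn.
have loss_leaf : p <= loss d.
  have := size_OC_leaf V (size_largest_path d V d); rewrite /loss; lia.
have [k [/andP[k_gt0 k_le_d] p_le_lossk losskp]] := ex_first_reach loss0 loss_leaf.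
exists (mkseq (largest_path d V) k.+1).
rewrite /minimal_seq_lacking size_mkseq /= !nth_mkseq ?ltnS ?leq_pred //.
by split; [exact: seq_largest_path | split].
Qed.
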